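(* Let $G$ be a finite simple graph on $\{x_1,\dots,x_n\}$, $S=\mathbb{K}[x_1,\dots,x_n]$, and let $x_ix_j$ be an edge of $G$. Set $L:=N_G(x_i)\cap N_G(x_j)$ and let $G'$ be the graph with $V(G')=V(G)\setminus L$ and edge set $$E(G')=E(G\setminus L)\cup\{x_px_q\mid x_p\in N_{G\setminus L}(x_i),\ x_q\in N_{G\setminus L}(x_j)\}.$$ Then, as ideals of $S$, $$(I(G):x_i)\cap (I(G):x_j)=I(G')+(L),$$ where $(L)$ is the ideal generated by the variables in $L$.
   Context: Vertices of $G$ are identified with variables of $S$; the edge ideal is $I(G)=(x_px_q : x_px_q\in E(G))\subseteq S$, and for a graph on a subset of the vertices its edge ideal is likewise taken in $S$. $N_G(x)$ denotes the neighbour set of $x$. For $U\subseteq V(G)$, $G\setminus U$ has vertex set $V(G)\setminus U$ and edge set $\{e\in E(G): e\cap U=\emptyset\}$. $(I:u)$ denotes the colon ideal $\{f\in S: fu\in I\}$. *)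

From HB Require Import structures.
From mathcomp Require Import all_boot all_algebra.
From mathcomp Require Import mpoly.
Set Implicit Arguments. Unset Strict Implicit. Unset Printing Implicit Defensive.
Import GRing.Theory.
Local Open Scope ring_scope.

(* Polynomial ring S = K[x_0,...,x_{n-1}] is {mpoly K[n]}; vertex p : 'I_n is
   identified with the variable 'X_p.  Ideals are represented as predicates
   (Prop-valued sets) on S. *)

Section Defs.
Variables (K : fieldType) (n : nat).
Notation S := {mpoly K[n]}.

Definition ideal_gen (P : S -> Prop) (f : S) : Prop :=
  exists s : seq (S * S),
    (forall c, c \in s -> P c.2) /\ f = \sum_(c <- s) c.1 * c.2.

Definition edge_ideal (G : rel 'I_n) : S -> Prop :=
  ideal_gen (fun g => exists p q, G p q /\ g = 'X_p * 'X_q).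

Definition var_ideal (U : pred 'I_n) : S -> Prop :=
  ideal_gen (fun g => exists p, U p /\ g = 'X_p).

Definition ideal_sum (I J : S -> Prop) : S -> Prop :=
  ideal_gen (fun g => I g \/ J g).

Definition colon (I : S -> Prop) (u : S) : S -> Prop := fun f => I (f * u).

Definition ideal_cap (I J : S -> Prop) : S -> Prop := fun f => I f /\ J f.

Definition ideal_eq (I J : S -> Prop) : Prop := forall f, I f <-> J f.

Definition simple_graph (G : rel 'I_n) : Prop :=
  ssrbool.symmetric G /\ ssrbool.irreflexive G.

Definition nbhd (G : rel 'I_n) (x : 'I_n) : pred 'I_n := fun y => G x y.

Definition del_vertices (G : rel 'I_n) (U : pred 'I_n) : rel 'I_n :=
  fun p q => [&& G p q, ~~ U p & ~~ U q].

Definition common_nbhd (G : rel 'I_n) (i j : 'I_n) : pred 'I_n :=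
  fun p => nbhd G i p && nbhd G j p.

Definition Gprime (G : rel 'I_n) (i j : 'I_n) : rel 'I_n :=
  let L := common_nbhd G i j in
  let GL := del_vertices G L in
  fun p q => [|| GL p q,
                (nbhd GL i p && nbhd GL j q) |
                (nbhd GL i q && nbhd GL j p)].

End Defs.

Arguments edge_ideal K {n} G.
Arguments var_ideal K {n} U.

From HB Require Import structures.
From mathcomp Require Import all_boot all_algebra.
From mathcomp Require Import mpoly.
From mathcomp Require Import zify.
Set Implicit Arguments. Unset Strict Implicit. Unset Printing Implicit Defensive.
Import GRing.Theory.
Local Open Scope ring_scope.

(* All ideals involved are monomial ideals, so everything reduces to exponent
   vectors.  If x_p x_q divides x^m x_k then either x_p x_q divides x^m or
   {p, q} contains k and x^m is divisible by a neighbour of x_k.  Hence if x^m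
   lies in both colons, either an edge of G divides x^m (and then a variable of
   L or an edge of G \ L divides it), or x^m is divisible by x_q and x_q' with
   q ~ i and q' ~ j; then q or q' lies in L, or q <> q' and x_q x_q' is an edge
   of G'.  Conversely each generator of I(G') + (L), multiplied by x_i or by
   x_j, is divisible by an edge of G. *)

Section IdealClosure.
Variables (K : fieldType) (n : nat).
Notation S := {mpoly K[n]}.

Definition ideal_closed (Q : S -> Prop) : Prop :=
  [/\ Q 0, forall f g, Q f -> Q g -> Q (f + g) & forall r f, Q f -> Q (r * f)].

Lemma ideal_gen_closed (P : S -> Prop) : ideal_closed (ideal_gen P).
Proof.
split.
- by exists [::]; rewrite big_nil.
- move=> _ _ [s [Ps ->]] [t [Pt ->]]; exists (s ++ t); rewrite big_cat.
  by split=> // c; rewrite mem_cat => /orP[/Ps | /Pt].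
- move=> r _ [s [Ps ->]]; exists [seq (r * c.1, c.2) | c <- s]; split.
    by move=> _ /mapP[c /Ps Pc ->].
  by rewrite big_map mulr_sumr; apply: eq_bigr => c _; rewrite mulrA.
Qed.

Lemma sub_ideal_gen (P : S -> Prop) g : P g -> ideal_gen P g.
Proof.
move=> Pg; exists [:: (1, g)]; rewrite big_seq1 mul1r.
by split=> // c; rewrite inE => /eqP ->.
Qed.

Lemma ideal_gen_min (P Q : S -> Prop) :
  ideal_closed Q -> (forall g, P g -> Q g) -> forall f, ideal_gen P f -> Q f.
Proof.
move=> [Q0 QD QM] PQ _ [s [Ps ->]]; elim: s Ps => [|c s IHs] Ps.
  by rewrite big_nil.
rewrite big_cons; apply: QD; first by apply/QM/PQ/Ps/mem_head.
by apply: IHs => d sd; apply/Ps; rewrite inE sd orbT.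
Qed.

Lemma colon_closed (I : S -> Prop) u : ideal_closed I -> ideal_closed (colon I u).
Proof.
move=> [I0 ID IM]; split; rewrite /colon ?mul0r //.
- by move=> f g If Ig; rewrite mulrDl; apply: ID.
- by move=> r f If; rewrite -mulrA; apply: IM.
Qed.

Lemma ideal_cap_closed (I J : S -> Prop) :
  ideal_closed I -> ideal_closed J -> ideal_closed (ideal_cap I J).
Proof.
move=> [I0 ID IM] [J0 JD JM]; split=> //.
- by move=> f g [If Jf] [Ig Jg]; split; [apply: ID | apply: JD].
- by move=> r f [If Jf]; split; [apply: IM | apply: JM].
Qed.

Lemma ideal_mpolyX_dvd (Q : S -> Prop) e m :
  ideal_closed Q -> Q 'X_[e] -> (e <= m)%MM -> Q 'X_[m].
Proof. by move=> [_ _ QM] Qe /submK <-; rewrite mpolyXD; apply: QM. Qed.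

Lemma ideal_msupp (Q : S -> Prop) f :
  ideal_closed Q -> (forall m, m \in msupp f -> Q 'X_[m]) -> Q f.
Proof.
move=> [Q0 QD QM] Qm; rewrite (mpolyE f) big_seq.
apply: (big_ind Q) => // m fm; rewrite -mul_mpolyC; exact/QM/Qm.
Qed.

Lemma monomial_ideal_msupp (P : S -> Prop) (E : 'X_{1..n} -> Prop) h m :
  (forall g, P g -> exists2 e, E e & g = 'X_[e]) ->
  ideal_gen P h -> m \in msupp h -> exists2 e, E e & (e <= m)%MM.
Proof.
move=> PE Ih; move: m; apply: (ideal_gen_min (Q := fun h => forall m,
  m \in msupp h -> exists2 e, E e & (e <= m)%MM) _ _ Ih).
- split=> [|f g Qf Qg m| r f Qf m]; first by rewrite msupp0.
  + by move/msuppD_le; rewrite mem_cat => /orP[/Qf | /Qg].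
  + move/msuppM_le => /allpairsP[[m1 m2] /= [_ /Qf[e Ee le_e] ->]].
    by exists e => //; apply: lepm_trans le_e (lem_addl _ _).
- move=> g /PE[e Ee ->] m; rewrite msuppX inE => /eqP ->.
  by exists e => //; apply/mnm_lepP.
Qed.

End IdealClosure.

Section EdgeIdeals.
Variable n : nat.
Implicit Types (G H : rel 'I_n) (m e : 'X_{1..n}).

Definition edge_divides G m : Prop :=
  exists p q, G p q /\ (U_(p) + U_(q) <= m)%MM.

Definition nbr_divides G i m : Prop := exists2 q, G i q & (U_(q) <= m)%MM.

Definition edge_var_exp G (U : pred 'I_n) e : Prop :=
  (exists p q, G p q /\ e = (U_(p) + U_(q))%MM) \/ (exists2 l, U l & e = U_(l)%MM).

Lemma edge_divides_addU G k m :
  ssrbool.symmetric G -> edge_divides G (m + U_(k)) ->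
  nbr_divides G k m \/ edge_divides G m.
Proof.
move=> symG [p [q [Gpq /mnm_lepP le_pq]]].
have [eq_pk | neq_pk] := eqVneq p k.
  subst k; left; exists q => //; apply/mnm_lepP => t.
  by move: (le_pq t); rewrite !mnmDE; lia.
have [eq_qk | neq_qk] := eqVneq q k.
  subst k; left; exists p; first by rewrite symG.
  by apply/mnm_lepP => t; move: (le_pq t); rewrite !mnmDE; lia.
right; exists p, q; split=> //; apply/mnm_lepP => t; move: (le_pq t).
rewrite !mnmDE !mnm1E; have [<- | _] := eqVneq k t; last by rewrite addn0.
by rewrite (negbTE neq_pk) (negbTE neq_qk).
Qed.

Variables (K : fieldType) (G : rel 'I_n).

Lemma edge_divides_edge_ideal m : edge_divides G m -> edge_ideal K G 'X_[m].
Proof.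
move=> [p [q [Gpq le_pq]]]; apply: ideal_mpolyX_dvd le_pq.
  exact: ideal_gen_closed.
by apply: sub_ideal_gen; exists p, q; rewrite mpolyXD.
Qed.

Lemma edge_ideal_msupp h m :
  edge_ideal K G h -> m \in msupp h -> edge_divides G m.
Proof.
have gens (g : {mpoly K[n]}) : (exists p q, G p q /\ g = 'X_p * 'X_q) ->
    exists2 e, (exists p q, G p q /\ e = (U_(p) + U_(q))%MM) & g = 'X_[e].
  by move=> [p [q [Gpq ->]]]; exists (U_(p) + U_(q))%MM; [exists p, q | rewrite mpolyXD].
move=> Ih hm; have [_ [p [q [Gpq ->]]] le_e] := monomial_ideal_msupp gens Ih hm.
by exists p, q.
Qed.

Lemma edge_var_exp_ideal_sum (U : pred 'I_n) e :
  edge_var_exp G U e -> ideal_sum (edge_ideal K G) (var_ideal K U) 'X_[e].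
Proof.
move=> [[p [q [Gpq ->]]] | [l Ul ->]]; apply: sub_ideal_gen.
  by left; apply: sub_ideal_gen; exists p, q; rewrite mpolyXD.
by right; apply: sub_ideal_gen; exists l.
Qed.

Lemma ideal_sum_edge_var_min (U : pred 'I_n) (Q : {mpoly K[n]} -> Prop) :
  ideal_closed Q -> (forall e, edge_var_exp G U e -> Q 'X_[e]) ->
  forall f, ideal_sum (edge_ideal K G) (var_ideal K U) f -> Q f.
Proof.
move=> closedQ QX; apply: ideal_gen_min => // g [] /(ideal_gen_min closedQ); apply.
  by move=> _ [p [q [Gpq ->]]]; rewrite -mpolyXD; apply: QX; left; exists p, q.
by move=> _ [l [Ul ->]]; apply: QX; right; exists l.
Qed.

End EdgeIdeals.

Section ColonExponents.
Variables (n : nat) (G : rel 'I_n) (i j : 'I_n).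
Implicit Type m : 'X_{1..n}.

Local Notation L := (common_nbhd G i j).
Local Notation G' := (Gprime G i j).

Lemma edge_divides_exp m :
  edge_divides G m -> exists2 e, edge_var_exp G' L e & (e <= m)%MM.
Proof.
move=> [p [q [Gpq le_pq]]].
case Lp: (L p).
  exists U_(p)%MM; first by right; exists p.
  exact: lepm_trans (lem_addr _ _) le_pq.
case Lq: (L q).
  exists U_(q)%MM; first by right; exists q.
  exact: lepm_trans (lem_addl _ _) le_pq.
exists (U_(p) + U_(q))%MM => //; left; exists p, q; split=> //.
by rewrite /Gprime /del_vertices Gpq Lp Lq.
Qed.

Lemma nbr_divides_exp m : irreflexive G ->
  nbr_divides G i m -> nbr_divides G j m ->
  exists2 e, edge_var_exp G' L e & (e <= m)%MM.
Proof.
move=> irrG [q Giq /mnm_lepP le_q] [q' Gjq' /mnm_lepP le_q'].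
case Lq: (L q); first by exists U_(q)%MM; [right; exists q | apply/mnm_lepP].
case Lq': (L q'); first by exists U_(q')%MM; [right; exists q' | apply/mnm_lepP].
have neq_qq' : q != q'.
  by apply: contraFneq Lq => eq_qq'; rewrite /common_nbhd /nbhd Giq eq_qq' Gjq'.
exists (U_(q) + U_(q'))%MM.
  left; exists q, q'; split=> //.
  have Li : L i = false by rewrite /common_nbhd /nbhd irrG.
  have Lj : L j = false by rewrite /common_nbhd /nbhd irrG andbF.
  by rewrite /Gprime /nbhd /del_vertices Giq Gjq' Li Lj Lq Lq' /= orbT.
apply/mnm_lepP => t; move: (le_q t) (le_q' t); rewrite mnmDE !mnm1E.
by have [<- | _] := eqVneq q t; [rewrite eq_sym (negbTE neq_qq') | rewrite add0n].
Qed.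

Lemma colon_edge_var_exp m : simple_graph G ->
  edge_divides G (m + U_(i)) -> edge_divides G (m + U_(j)) ->
  exists2 e, edge_var_exp G' L e & (e <= m)%MM.
Proof.
move=> [symG irrG] /(edge_divides_addU symG)[nbr_i | /edge_divides_exp //].
move=> /(edge_divides_addU symG)[nbr_j | /edge_divides_exp //].
exact: nbr_divides_exp.
Qed.

Lemma edge_var_exp_colon e :
  edge_var_exp G' L e -> edge_divides G (e + U_(i)) /\ edge_divides G (e + U_(j)).
Proof.
have le_l a b c : (U_(a) + U_(b) <= U_(b) + U_(c) + U_(a))%MM.
  by apply/mnm_lepP => t; rewrite !mnmDE; lia.
have le_r a b c : (U_(a) + U_(b) <= U_(c) + U_(b) + U_(a))%MM.
  by apply/mnm_lepP => t; rewrite !mnmDE; lia.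
case=> [[p [q [G'pq ->]]] | [l /andP[Gil Gjl] ->]]; last first.
  by split; [exists i, l | exists j, l]; split=> //; apply/mnm_lepP => t;
    rewrite !mnmDE addnC.
case/or3P: G'pq => [/and3P[Gpq _ _] | /andP[/and3P[Gip _ _] /and3P[Gjq _ _]]
                  | /andP[/and3P[Giq _ _] /and3P[Gjp _ _]]].
- by split; exists p, q; split=> //; apply: lem_addr.
- by split; [exists i, p; split=> //; apply: le_l
             | exists j, q; split=> //; apply: le_r].
- by split; [exists i, q; split=> //; apply: le_r
             | exists j, p; split=> //; apply: le_l].
Qed.

End ColonExponents.

Theorem lemma3p2 (K : fieldType) (n : nat) (G : rel 'I_n) (i j : 'I_n) :
  simple_graph G -> G i j ->
  ideal_eq
    (ideal_cap (colon (edge_ideal K G) 'X_i) (colon (edge_ideal K G) 'X_j))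
    (ideal_sum (edge_ideal K (Gprime G i j))
               (var_ideal K (common_nbhd G i j))).
Proof.
move=> simpleG _ f; split.
- move=> [f_i f_j]; apply: ideal_msupp => [|m fm]; first exact: ideal_gen_closed.
  have fXk k : (m + U_(k))%MM \in msupp (f * 'X_k).
    by rewrite mcoeff_msupp addmC mcoeffMX -mcoeff_msupp.
  have [e e_gen le_em] := colon_edge_var_exp simpleG
    (edge_ideal_msupp f_i (fXk i)) (edge_ideal_msupp f_j (fXk j)).
  apply: ideal_mpolyX_dvd le_em; first exact: ideal_gen_closed.
  exact: edge_var_exp_ideal_sum.
- apply: ideal_sum_edge_var_min => [|e /edge_var_exp_colon [e_i e_j]].
    by apply: ideal_cap_closed; apply/colon_closed/ideal_gen_closed.
  by split; rewrite /colon -mpolyXD; apply: edge_divides_edge_ideal.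
Qed.
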